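(* Let $\Gamma$ be a MaxSAT instance encoded with blocking variables, with $\mathrm{cost}(\Gamma)=k$, and let $A$ be the set of total assignments $\alpha\models\Gamma$ with $\mathrm{cost}(\alpha)=k$. Suppose every two distinct assignments in $A$ have Hamming distance at least $d$, and for every blocking variable $b$ there are $\alpha,\beta\in A$ with $\alpha(b)=0$, $\beta(b)=1$. Then every derivation in the cost-SPR calculus from $\Gamma$ that derives a unit clause $b$ for some blocking variable $b$ contains a clause introduced by the cost-SPR rule of width (number of literals) at least $d$.
   Context: Literals, clauses, CNFs (multisets of clauses), $\mathrm{Var}(\Gamma)$. A substitution $\sigma$ maps variables to $0$, $1$ or literals, extended by $\sigma(\lnot x)=\lnot\sigma(x)$; $(\sigma\circ\tau)(x)=\sigma(\tau(x))$. A (partial) assignment has $\sigma(x)\in\{0,1,x\}$; its domain is $\sigma^{-1}(\{0,1\})$; total means all variables assigned. $C{\upharpoonright}_\sigma$: apply $\sigma$ to literals and simplify; $\Gamma{\upharpoonright}_\sigma$ is the multiset of $C{\upharpoonright}_\sigma\ne1$, $C\in\Gamma$. $\lnot C$ is the partial assignment falsifying all literals of $C$. $\Gamma\vdash_1 C$ means unit propagation on $\Gamma{\upharpoonright}_{\lnot C}$ derives the empty clause; $\Gamma\vdash_1\Delta$ means this for all $D\in\Delta$. A MaxSAT instance encoded with blocking variables is a CNF $\Gamma=H\cup\{C_1\lor b_1,\dots,C_m\lor b_m\}$ with distinct fresh blocking variables $b_i$; $\mathrm{cost}(\alpha)=\sum_i\alpha(b_i)$; $\mathrm{cost}(\Gamma)=\min\{\mathrm{cost}(\alpha):\alpha\models\Gamma\}$.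 $C$ is cost-SPR w.r.t. $\Gamma$ if there is a partial assignment $\sigma$ with the same domain as $\lnot C$ such that (1) $\Gamma{\upharpoonright}_{\lnot C}\vdash_1(\Gamma\cup\{C\}){\upharpoonright}_\sigma$ and (2) $\mathrm{cost}(\tau\circ\sigma)\le\mathrm{cost}(\tau)$ for all total $\tau\supseteq\lnot C$. A cost-SPR calculus derivation from $\Gamma$: sequence $D_1,\dots,D_t$, each in $\Gamma$, or by weakening/resolution from earlier clauses, or cost-SPR w.r.t. $\Gamma\cup\{D_1,\dots,D_{i-1}\}$ with $\mathrm{Var}(D_i)\subseteq\mathrm{Var}(\Gamma)$. *)

From mathcomp Require Import all_boot.
Set Implicit Arguments.
Unset Strict Implicit.
Unset Printing Implicit Defensive.

(** Variables are natural numbers; a literal is (x, true) for x and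
    (x, false) for ~x.  Clauses are sequences of literals (read as sets for
    resolution/weakening; width = number of distinct literals). *)
Definition lit := (nat * bool)%type.
Definition clause := seq lit.
Definition cnf := seq clause.

Definition vars (F : cnf) : seq nat := undup (flatten [seq map fst C | C <- F]).

Inductive sval := SC of bool | SL of lit.
Definition subst := nat -> sval.

Definition subst_lit (s : subst) (l : lit) : sval :=
  match s l.1 with
  | SC b => SC (b == l.2)
  | SL (y, q) => SL (y, q == l.2)
  end.

Definition sv_true (v : sval) : bool := if v is SC true then true else false.
Definition sv_lit (v : sval) : option lit := if v is SL l then Some l else None.

(** C|_sigma : None stands for the constant 1 (satisfied clause);
    otherwise the falsified literals are removed. *)
Definition restrict_clause (s : subst) (C : clause) : option clause :=
  if has (fun l => sv_true (subst_lit s l)) C then None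
  else Some (pmap (fun l => sv_lit (subst_lit s l)) C).

Definition restrict (s : subst) (F : cnf) : cnf := pmap (restrict_clause s) F.

Definition tautological (C : clause) : bool := has (fun l => (l.1, ~~ l.2) \in C) C.

(** not C : the partial assignment falsifying all literals of C
    (only meaningful for non-tautological C). *)
Definition negC (C : clause) : subst := fun x =>
  if (x, true) \in C then SC false
  else if (x, false) \in C then SC true
  else SL (x, true).

Definition assign_lit (l : lit) : subst := fun x =>
  if x == l.1 then SC l.2 else SL (x, true).

Inductive UPref : cnf -> Prop :=
| UP_empty F : [::] \in F -> UPref F
| UP_unit F C l : C \in F -> undup C = [:: l] ->
    UPref (restrict (assign_lit l) F) -> UPref F.

(** F |-_1 D  (a tautological D is trivially implied: not D does not exist). *)
Definition rup (F : cnf) (D : clause) : Prop :=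
  tautological D \/ UPref (restrict (negC D) F).

(** Partial assignments: sigma(x) in {0,1,x}; domain = sigma^{-1}({0,1}). *)
Definition is_partial_assignment (s : subst) : Prop :=
  forall x, (exists b, s x = SC b) \/ s x = SL (x, true).
Definition in_domain (s : subst) (x : nat) : Prop := exists b, s x = SC b.

Definition total := nat -> bool.
Definition lit_val (a : total) (l : lit) : bool := a l.1 == l.2.
Definition sat (a : total) (F : cnf) : bool := all (fun C => has (lit_val a) C) F.

Definition comp_total (t : total) (s : subst) : total := fun x =>
  match s x with SC b => b | SL l => lit_val t l end.

Definition extends_negC (t : total) (C : clause) : Prop :=
  forall l, l \in C -> lit_val t l = false.

(** MaxSAT instance encoded with blocking variables:
    Gamma = H u { C_i \/ b_i }. *)
Record maxsat := MaxSAT { hard : cnf; soft : seq (clause * nat) }.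

Definition gamma (M : maxsat) : cnf :=
  hard M ++ [seq (s.2, true) :: s.1 | s <- soft M].
Definition blocking (M : maxsat) : seq nat := map snd (soft M).

Definition wf_maxsat (M : maxsat) : Prop :=
  uniq (blocking M) /\
  forall b, b \in blocking M -> b \notin vars (hard M ++ map fst (soft M)).

Definition cost (M : maxsat) (a : total) : nat :=
  sumn [seq nat_of_bool (a b) | b <- blocking M].

Definition is_cost (M : maxsat) (k : nat) : Prop :=
  (exists a, sat a (gamma M) /\ cost M a = k) /\
  (forall a, sat a (gamma M) -> k <= cost M a).

Definition cost_SPR (M : maxsat) (F : cnf) (C : clause) : Prop :=
  ~~ tautological C /\
  exists s : subst,
    is_partial_assignment s /\
    (forall x, in_domain s x <-> x \in map fst C) /\
    (forall D, D \in restrict s (F ++ [:: C]) -> rup (restrict (negC C) F) D) /\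
    (forall t : total, extends_negC t C -> cost M (comp_total t s) <= cost M t).

Inductive rule := RAxiom | RWeakening | RResolution | RCostSPR.

Definition valid_step (M : maxsat) (P : cnf) (D : clause) (r : rule) : Prop :=
  match r with
  | RAxiom => D \in gamma M
  | RWeakening => exists E, E \in P /\ {subset E <= D}
  | RResolution => exists E1 E2 x, E1 \in P /\ E2 \in P /\
      (x, true) \in E1 /\ (x, false) \in E2 /\
      D =i [seq l <- E1 | l != (x, true)] ++ [seq l <- E2 | l != (x, false)]
  | RCostSPR => cost_SPR M (gamma M ++ P) D /\
      {subset map fst D <= vars (gamma M)}
  end.

Definition dstep0 : clause * rule := ([::], RAxiom).

Definition derivation (M : maxsat) (ds : seq (clause * rule)) : Prop :=
  forall i, i < size ds ->
    valid_step M (map fst (take i ds)) (nth dstep0 ds i).1 (nth dstep0 ds i).2.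

Definition width (C : clause) : nat := size (undup C).

Definition in_A (M : maxsat) (k : nat) (a : total) : Prop :=
  sat a (gamma M) /\ cost M a = k.
Definition hamming (M : maxsat) (a b : total) : nat :=
  count (fun x => a x != b x) (vars (gamma M)).

(** If every cost-SPR clause of a derivation had width below d, every clause
    derived would be satisfied by every optimal assignment.  Indeed, an optimal
    assignment a falsifying a cost-SPR clause D is repaired by the witness
    substitution into an assignment that satisfies the formula and D, is no
    more costly (hence again optimal) and differs from a only on Var(D); by
    the distance hypothesis it then coincides with a on Var(Gamma), so a
    already satisfied D.  But the unit clause b is falsified by the optimal
    assignments with b = 0. *)

From Stdlib Require Import Classical_Prop.
From mathcomp Require Import all_boot.

Set Implicit Arguments.
Unset Strict Implicit.
Unset Printing Implicit Defensive.

Lemma lit_val_comp_total t s l : lit_val (comp_total t s) l =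
  match subst_lit s l with SC b => b | SL l' => lit_val t l' end.
Proof.
case: l => x p; rewrite /lit_val /comp_total /subst_lit /=.
case: (s x) => [b|[y q]] /=; first by case: b; case: p.
by rewrite /lit_val /=; case: (t y); case: q; case: p.
Qed.

Lemma has_comp_total t s C : has (lit_val (comp_total t s)) C =
  oapp (has (lit_val t)) true (restrict_clause s C).
Proof.
rewrite /restrict_clause; case: ifP => [/hasP[l Cl sl]|/negbT /=].
  by apply/hasP; exists l; rewrite // lit_val_comp_total; case: subst_lit sl => [[]|].
elim: C => //= l C IHC /norP[/negbTE sl /IHC ->].
by rewrite lit_val_comp_total; case: subst_lit sl => [[]|].
Qed.

Lemma sat_comp_total t s F : sat (comp_total t s) F = sat t (restrict s F).
Proof. by rewrite /sat /restrict all_pmap; apply: eq_all => C; apply: has_comp_total. Qed.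

Lemma sat_restrict_fixed t s F : comp_total t s =1 t ->
  sat t (restrict s F) = sat t F.
Proof.
move=> ts_t; rewrite -sat_comp_total; apply: eq_all => C.
by apply: eq_has => l; rewrite /lit_val ts_t.
Qed.

Lemma sat_cat t F G : sat t (F ++ G) = sat t F && sat t G.
Proof. exact: all_cat. Qed.

Lemma comp_total_negC t C : extends_negC t C -> comp_total t (negC C) =1 t.
Proof.
move=> tC x; rewrite /comp_total /negC /lit_val /=.
case: ifP => [/tC|_]; last case: ifP => [/tC|_]; rewrite /lit_val /=;
  by case: (t x).
Qed.

Lemma extends_negC_unsat t C : ~~ has (lit_val t) C -> extends_negC t C.
Proof. by move=> /hasPn tC l /tC/negbTE. Qed.

Lemma UPref_unsat F t : UPref F -> ~~ sat t F.
Proof.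
move=> UP_F; elim: UP_F t => [{}F F0|{}F C l FC unitC _ IH] t; apply/negP => tF.
  by have := allP tF _ F0.
have /hasP[l' + tl'] := allP tF _ FC.
rewrite -mem_undup unitC mem_seq1 => /eqP El'; subst l'.
have /negP := IH t; apply; rewrite sat_restrict_fixed // => x.
rewrite /comp_total /assign_lit /lit_val /=; case: eqP => [->|_].
  by move/eqP: tl'.
by case: (t x).
Qed.

Lemma rup_sound F D t : rup F D -> sat t F -> has (lit_val t) D.
Proof.
case=> [/hasP[l Dl Dl']|UP_F] tF.
  apply/hasP; case tl: (lit_val t l); first by exists l.
  exists (l.1, ~~ l.2) => //; move: tl; rewrite /lit_val /=.
  by case: (t l.1); case: l.2.
apply/negPn/negP => /extends_negC_unsat tD.
have /negP := UPref_unsat t UP_F; apply.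
by rewrite sat_restrict_fixed //; apply: comp_total_negC.
Qed.

Lemma cost_SPR_repair M F C t : cost_SPR M F C -> sat t F -> ~~ has (lit_val t) C ->
  exists t', [/\ sat t' (F ++ [:: C]), cost M t' <= cost M t &
                 forall x, t x != t' x -> x \in map fst C].
Proof.
move=> [_ [s [s_partial [s_dom [s_rup s_cost]]]]] tF /extends_negC_unsat tC.
exists (comp_total t s); split; last 2 first.
- exact: s_cost.
- move=> x; case: (s_partial x) => [[c sx]|sx]; first by move=> _; apply/s_dom; exists c.
  by rewrite /comp_total sx /lit_val /=; case: (t x).
rewrite sat_comp_total; apply/allP => D sD.
apply: rup_sound (s_rup D sD) _.
by rewrite sat_restrict_fixed //; apply: comp_total_negC.
Qed.

Lemma hamming_le_width M a b D : (forall x, a x != b x -> x \in map fst D) ->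
  hamming M a b <= width D.
Proof.
move=> ab_D; rewrite /hamming -size_filter.
have var_le_width : size (undup (map fst D)) <= width D.
  rewrite /width -(size_map fst (undup D)) uniq_leq_size ?undup_uniq // => x.
  by rewrite mem_undup => /mapP[l Dl ->]; rewrite map_f ?mem_undup.
apply: leq_trans var_le_width; apply: uniq_leq_size.
  by rewrite filter_uniq ?undup_uniq.
by move=> x; rewrite mem_filter mem_undup => /andP[/ab_D].
Qed.

Lemma hamming_eq0 M a b x : hamming M a b = 0 -> x \in vars (gamma M) -> a x = b x.
Proof.
by move=> /eqP; rewrite -leqn0 leqNgt -has_count => /hasPn ab x_var; apply/eqP/negPn/ab.
Qed.

Lemma valid_step_sound M P D r t : r <> RCostSPR -> valid_step M P D r ->
  sat t (gamma M) -> sat t P -> has (lit_val t) D.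
Proof.
case: r => //= _.
- by move=> D_ax tG _; apply: (allP tG).
- move=> [E [PE sub_ED]] _ tP; have /hasP[l El tl] := allP tP _ PE.
  by apply/hasP; exists l; first apply: sub_ED.
move=> [E1 [E2 [x [PE1 [PE2 [_ [_ D_res]]]]]]] _ tP.
have /hasP[l1 E1l1 tl1] := allP tP _ PE1.
have /hasP[l2 E2l2 tl2] := allP tP _ PE2.
apply/hasP; case tx: (t x).
- exists l2 => //; rewrite D_res mem_cat; apply/orP; right.
  rewrite mem_filter E2l2 andbT.
  by apply: contraTneq tl2 => ->; rewrite /lit_val tx.
- exists l1 => //; rewrite D_res mem_cat; apply/orP; left.
  rewrite mem_filter E1l1 andbT.
  by apply: contraTneq tl1 => ->; rewrite /lit_val tx.
Qed.

Section OptimalAssignments.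

Variables (M : maxsat) (k d : nat).
Hypothesis cost_ge_k : forall a, sat a (gamma M) -> k <= cost M a.
Hypothesis optimal_far : forall a b, in_A M k a -> in_A M k b ->
  hamming M a b != 0 -> d <= hamming M a b.

Lemma narrow_cost_SPR_sound P D a :
  cost_SPR M (gamma M ++ P) D -> {subset map fst D <= vars (gamma M)} ->
  width D < d -> in_A M k a -> sat a P -> has (lit_val a) D.
Proof.
move=> D_spr D_vars D_narrow [aG a_cost] aP; apply/negPn/negP => aD.
have aGP : sat a (gamma M ++ P) by rewrite sat_cat aG.
have [b [bGPD b_cost ab_D]] := cost_SPR_repair D_spr aGP aD.
move: bGPD; rewrite sat_cat => /andP[]; rewrite sat_cat => /andP[bG _].
rewrite /sat /= andbT => bD.
have bA : in_A M k b by split=> //; apply/eqP; rewrite eqn_leq cost_ge_k // andbT -a_cost.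
have ab0 : hamming M a b = 0.
  apply/eqP; apply: contraTT D_narrow => /(optimal_far (conj aG a_cost) bA) dist_ge.
  by rewrite -leqNgt (leq_trans dist_ge) ?hamming_le_width.
have /hasP[l Dl bl] := bD.
have /hasPn/(_ l Dl) := aD.
by rewrite /lit_val (hamming_eq0 ab0 (D_vars _ (map_f fst Dl))) => /negP.
Qed.

Lemma derivation_sound ds : derivation M ds ->
  (forall i, i < size ds -> (nth dstep0 ds i).2 = RCostSPR ->
     width (nth dstep0 ds i).1 < d) ->
  forall a, in_A M k a -> sat a (map fst ds).
Proof.
move=> der narrow a aA.
suff prefix_sat n : n <= size ds -> sat a (map fst (take n ds)).
  by rewrite -(take_size ds) prefix_sat.
elim: n => [|n IHn] lt_n; first by rewrite take0.
have aP := IHn (ltnW lt_n).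
rewrite (take_nth dstep0 lt_n) map_rcons /sat all_rcons -/(sat _ _) aP andbT.
have := der n lt_n; have := narrow n lt_n.
case: (nth dstep0 ds n) => D r /= D_narrow step.
case: r step D_narrow => step D_narrow; last first.
  case: step => D_spr D_vars.
  exact: narrow_cost_SPR_sound D_spr D_vars (D_narrow erefl) aA aP.
all: by apply: valid_step_sound step (proj1 aA) aP.
Qed.

End OptimalAssignments.

Theorem corollary5p4 (M : maxsat) (k d : nat) (ds : seq (clause * rule)) :
  wf_maxsat M ->
  is_cost M k ->
  (forall a b, in_A M k a -> in_A M k b -> hamming M a b != 0 ->
     d <= hamming M a b) ->
  (forall b, b \in blocking M ->
     exists a a', in_A M k a /\ in_A M k a' /\ a b = false /\ a' b = true) ->
  derivation M ds ->
  (exists b i, b \in blocking M /\ i < size ds /\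
     (nth dstep0 ds i).1 =i [:: (b, true)]) ->
  exists i, i < size ds /\ (nth dstep0 ds i).2 = RCostSPR /\
    d <= width (nth dstep0 ds i).1.
Proof.
move=> _ [_ cost_ge_k] optimal_far b_flexible der [b [i [b_blocking [lt_i unit_b]]]].
apply: NNPP => no_wide_SPR.
have narrow j : j < size ds -> (nth dstep0 ds j).2 = RCostSPR ->
    width (nth dstep0 ds j).1 < d.
  by move=> lt_j spr; rewrite ltnNge; apply/negP => wide; apply: no_wide_SPR; exists j.
have [a [_ [aA [_ [ab0 _]]]]] := b_flexible b b_blocking.
have ith_derived : (nth dstep0 ds i).1 \in map fst ds.
  by rewrite -(nth_map dstep0 [::]) // mem_nth ?size_map.
have := allP (derivation_sound cost_ge_k optimal_far der narrow aA) _ ith_derived.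
by rewrite (eq_has_r unit_b) /= /lit_val /= ab0.
Qed.
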